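(* Let $L,M,N\in\mathbb N$ and $S=\{m/N^{L+M}: m=1,\dots,N^{L+M}-1\}$. Let $\vec B_L$ be a binary digit vector of length $N^L$ and $\vec B_M$ a binary digit vector of length $N^M$. Then $F_{\vec B_L}(x)=F_{\vec B_M}(x)$ for all $x\in S$ if and only if $F_{\vec B_L}=F_{\vec B_M}$.
   Context: A binary digit vector of length (scale factor) $K\ge3$ is $\vec B=(b_0,\dots,b_{K-1})\in\{0,1\}^K$ with $2\le\|\vec B\|:=\sum_i b_i\le K-1$; its digit set is $D=\{i:b_i=1\}$. With $\phi_d(x)=(x+d)/K$ for $d\in D$, let $\mu_{\vec B}$ be the unique Borel probability measure with $\mu_{\vec B}=\frac{1}{\|\vec B\|}\sum_{d\in D}\mu_{\vec B}\circ\phi_d^{-1}$, supported on the attractor $C_{\vec B}\subset[0,1]$. The CDF is $F_{\vec B}(x)=\mu_{\vec B}([0,x])$, $x\in[0,1]$. *)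

From HB Require Import structures.
From mathcomp Require Import all_boot all_order all_algebra.
From mathcomp Require Import all_classical all_reals all_analysis.
Set Implicit Arguments. Unset Strict Implicit. Unset Printing Implicit Defensive.
Import Order.TTheory GRing.Theory Num.Theory.
Local Open Scope classical_set_scope.
Local Open Scope ring_scope.

Definition digit_vector (K : nat) (B : seq bool) : bool :=
  [&& (3 <= K)%N, size B == K, (2 <= count id B)%N & (count id B <= K.-1)%N].

Definition phi {R : realType} (K d : nat) (x : R) : R := (x + d%:R) / K%:R.

Definition selfsim {R : realType} (K : nat) (B : seq bool)
  (mu : probability R R) : Prop :=
  forall A : set R, measurable A ->
    (mu A = ((count id B)%:R^-1)%:E *
           \sum_(d < K | nth false B d) mu (phi K d @^-1` A))%E.

Definition cdfB {R : realType} (mu : probability R R) (x : R) : \bar R :=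
  mu [set` `[0, x]].

(* On the j-th cell of scale K the distribution function of a
   self-similar measure satisfies F ((j + u) / K) = a_j + b_j F u, with
   0 <= b_j <= 1/2.  A point x of level L + M + r of the N-adic grid lies in a
   cell of level L + M; peeling off a cell of scale N^L from F_L, switching to
   F_M at the coarser level M + r, and peeling off a cell of scale N^M writes
   F_L x as alpha + beta * F_M y, where y has level r; symmetrically
   F_M x = alpha' + beta' * F_L y.  By induction on the level F_L y = F_M y,
   and the two affine maps agree at y = 0 and y = 1 by hypothesis, hence at y.
   So F_L = F_M on the whole grid, and since F increases by at most 2^-n across
   a cell of level n, the grid determines F everywhere. *)

From HB Require Import structures.
From mathcomp Require Import all_boot all_order all_algebra.
From mathcomp Require Import all_classical all_reals all_analysis.
From mathcomp Require Import ring lra zify.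
Import Order.TTheory GRing.Theory Num.Theory numFieldNormedType.Exports.
Local Open Scope ring_scope.
Local Open Scope classical_set_scope.

Definition cdfr {R : realType} (mu : probability R R) (x : R) : R :=
  fine (mu `]-oo, x]).

Section distribution_function.
Context {R : realType} (mu : probability R R).

Let idTR : R -> R := idfun.

#[local] HB.instance Definition _ :=
  @isMeasurableFun.Build _ _ _ _ idTR (@measurable_id _ _ setT).

Lemma cdfrE x : mu `]-oo, x] = (cdfr mu x)%:E.
Proof. by rewrite /cdfr fineK // fin_num_measure. Qed.

Lemma cdfr_ge0 x : 0 <= cdfr mu x.
Proof. by rewrite -lee_fin -cdfrE. Qed.

Lemma cdfr_le1 x : cdfr mu x <= 1.
Proof. by rewrite -lee_fin -cdfrE probability_le1. Qed.

Lemma le_cdfr : {homo cdfr mu : x y / x <= y}.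
Proof.
move=> x y xy; rewrite -lee_fin -!cdfrE.
by apply: le_measure; rewrite ?inE //; apply: subitvPr; rewrite bnd_simp.
Qed.

Lemma cdfr_Ny0 : cdfr mu x @[x --> -oo] --> (0 : R).
Proof. apply: fine_cvg; exact: (cvg_cdfNy0 (idTR : {RV mu >-> R})). Qed.

Lemma cdfr_y1 : cdfr mu x @[x --> +oo] --> (1 : R).
Proof. apply: fine_cvg; exact: (cvg_cdfy1 (idTR : {RV mu >-> R})). Qed.

End distribution_function.

Lemma natrX_unbounded {R : archiRealFieldType} (c : R) {K : nat} :
  (1 < K)%N -> exists n, c < K%:R ^+ n.
Proof.
move=> K_gt1; exists (Num.truncn c).+1.
apply: lt_trans (truncnS_gt c) _.
by rewrite -natrX ltr_nat ltn_expl.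
Qed.

Lemma le_halfX_eq0 {R : archiRealFieldType} (e : R) :
  (forall n, `|e| <= 2^-1 ^+ n) -> e = 0.
Proof.
move=> e_le; apply/eqP; apply: contraT => e_neq0.
have e_gt0 : 0 < `|e| by rewrite normr_gt0.
have [n n_gt] := natrX_unbounded (`|e|^-1) (isT : (1 < 2)%N).
rewrite -(ltr_pM2l e_gt0) mulfV ?gt_eqF // in n_gt.
by move: (e_le n); rewrite exprVn -div1r ler_pdivlMr ?exprn_gt0 // leNgt n_gt.
Qed.

Lemma expn_gt1_pos N a : (1 < N ^ a)%N -> (0 < N)%N /\ (0 < a)%N.
Proof. by case: a => [|a]; [rewrite expn0 | case: N => //; rewrite exp0n]. Qed.

Definition gridpt {R : fieldType} (N n i : nat) : R := i%:R / (N ^ n)%:R.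

Section grid_points.
Context {R : archiRealFieldType} {N : nat}.
Hypothesis N_gt0 : (0 < N)%N.

Let NX_neq0 n : (N ^ n)%:R != 0 :> R.
Proof. by rewrite pnatr_eq0 -lt0n expn_gt0 N_gt0. Qed.

Lemma gridpt0 n : gridpt N n 0 = 0 :> R.
Proof. by rewrite /gridpt mul0r. Qed.

Lemma gridpt_top n : gridpt N n (N ^ n) = 1 :> R.
Proof. exact: divff. Qed.

Lemma gridptMn a b k : gridpt N (a + b) (k * N ^ b) = gridpt N a k :> R.
Proof.
by rewrite /gridpt expnD !natrM invfM mulrACA divff // mulr1.
Qed.

Lemma gridpt_itv n i : (i <= N ^ n)%N -> 0 <= (gridpt N n i : R) <= 1.
Proof.
move=> iN; rewrite divr_ge0 ?ler0n //=.
by rewrite ler_pdivrMr ?ltr0n ?expn_gt0 ?N_gt0 // mul1r ler_nat.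
Qed.

Lemma gridpt_bracket n (x : R) : 0 <= x < 1 ->
  exists2 i, (i < N ^ n)%N & gridpt N n i <= x <= gridpt N n i.+1.
Proof.
move=> /andP[x_ge0 x_lt1].
have Nn_gt0 : 0 < (N ^ n)%:R :> R by rewrite ltr0n expn_gt0 N_gt0.
have /andP[lo hi] := truncn_itv (mulr_ge0 x_ge0 (ltW Nn_gt0)).
exists (Num.truncn (x * (N ^ n)%:R)).
  by rewrite -(ltr_nat R) (le_lt_trans lo) // -[ltRHS]mul1r ltr_pM2r.
by rewrite /gridpt ler_pdivrMr // ler_pdivlMr // lo ltW.
Qed.

End grid_points.

Lemma sum1_digits {R : nzSemiRingType} (K : nat) (B : seq bool) :
  size B = K -> \sum_(d < K | nth false B d) (1 : R) = (count id B)%:R.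
Proof.
move=> <-; rewrite -sum1_count (big_nth false) big_mkord natr_sum.
exact: eq_bigr.
Qed.

Definition mass_below {R : fieldType} (K : nat) (B : seq bool) (j : nat) : R :=
  (count id B)%:R^-1 * \sum_(d < K | nth false B d && (d < j)%N) 1.

Definition mass_at {R : fieldType} (K : nat) (B : seq bool) (j : nat) : R :=
  (count id B)%:R^-1 * \sum_(d < K | nth false B d) (d == j :> nat)%:R.

Lemma mass_below0 {R : fieldType} K B : mass_below K B 0 = 0 :> R.
Proof. by rewrite /mass_below big_pred0 ?mulr0 // => d; rewrite andbF. Qed.

Lemma mass_belowS {R : fieldType} K B j :
  mass_below K B j.+1 = mass_below K B j + mass_at K B j :> R.
Proof.
rewrite /mass_below /mass_at -mulrDr !big_mkcondr -big_split /=.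
congr (_ * _); apply: eq_bigr => d _.
by rewrite ltnS leq_eqVlt orbC; case: ltngtP; rewrite ?addr0 ?add0r.
Qed.

Lemma mass_belowK {R : numFieldType} K B : size B = K -> (0 < count id B)%N ->
  mass_below K B K = 1 :> R.
Proof.
move=> sizeB B_gt0; rewrite /mass_below.
under eq_bigl => d do rewrite ltn_ord andbT.
by rewrite sum1_digits // mulVf // pnatr_eq0 -lt0n.
Qed.

Lemma mass_at_ge0 {R : numFieldType} K B j : 0 <= mass_at K B j :> R.
Proof. by rewrite mulr_ge0 ?invr_ge0 ?ler0n ?sumr_ge0. Qed.

Lemma mass_at_le_half {R : numFieldType} K B j : (2 <= count id B)%N ->
  mass_at K B j <= 2^-1 :> R.
Proof.
move=> B_ge2.
have sum_le1 : \sum_(d < K | nth false B d) (d == j :> nat)%:R <= 1 :> R.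
  apply: le_trans (_ : \sum_(d < K) (d == j :> nat)%:R <= 1).
    rewrite [leRHS](bigID (fun d : 'I_K => nth false B d)) /= lerDl.
    by rewrite sumr_ge0.
  case: (ltnP j K) => [jK | Kj].
    rewrite (bigD1 (Ordinal jK)) //= eqxx big1 ?addr0 // => d /eqP d_neq.
    by case: eqP => // dj; case: d_neq; apply: val_inj.
  by rewrite big1 // => d _; rewrite ltn_eqF // (leq_trans (ltn_ord d) Kj).
apply: le_trans (ler_wpM2l _ sum_le1) _; first by rewrite invr_ge0 ler0n.
by rewrite mulr1 lef_pV2 ?posrE ?ltr0n ?(leq_trans _ B_ge2) // ler_nat.
Qed.

Definition selfsim_measure {R : realType} (K : nat) (B : seq bool)
  (mu : probability R R) : Prop :=
  [/\ size B = K, (2 <= count id B)%N & selfsim K B mu].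

Section selfsimilar_cdf.
Context {R : realType} {K : nat} {B : seq bool} {mu : probability R R}.
Hypothesis mu_ss : selfsim_measure K B mu.

Local Notation F := (cdfr mu).
Local Notation S := ((count id B)%:R : R).

Lemma selfsim_scale_gt1 : (1 < K)%N.
Proof. by case: mu_ss => <- B_ge2 _; rewrite (leq_trans B_ge2) // count_size. Qed.

Let K_gt0 : (0 < K)%N. Proof. exact: ltnW selfsim_scale_gt1. Qed.
Let sizeB : size B = K. Proof. by case: mu_ss. Qed.
Let S_gt0 : 0 < S.
Proof. by case: mu_ss => _ B_ge2 _; rewrite ltr0n (leq_trans _ B_ge2). Qed.

Lemma cdfr_selfsim x :
  F x = S^-1 * \sum_(d < K | nth false B d) F (K%:R * x - d%:R).
Proof.
case: mu_ss => _ _ /(_ `]-oo, x] (measurable_itv _)).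
have K_pos : (0 : R) < K%:R by rewrite ltr0n.
have preimage_phi (d : nat) :
    phi K d @^-1` `]-oo, x] = `]-oo, K%:R * x - d%:R] :> set R.
  by apply/seteqP; split => y /=; rewrite !in_itv /= /phi ler_pdivrMr //
    lerBrDr mulrC.
under eq_bigr do rewrite preimage_phi cdfrE.
by rewrite cdfrE sumEFin -EFinM => -[].
Qed.

Let mean_le (f : 'I_K -> R) c : (forall d, f d <= c) ->
  S^-1 * \sum_(d < K | nth false B d) f d <= c.
Proof.
move=> f_le; rewrite ler_pdivrMl // -(@sum1_digits R _ _ sizeB) mulr_suml.
by apply: ler_sum => d _; rewrite mul1r.
Qed.

Let mean_ge (f : 'I_K -> R) c : (forall d, c <= f d) ->
  c <= S^-1 * \sum_(d < K | nth false B d) f d.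
Proof.
move=> f_ge; rewrite ler_pdivlMl // -(@sum1_digits R _ _ sizeB) mulr_suml.
by apply: ler_sum => d _; rewrite mul1r.
Qed.

Lemma cdfr_le_scale y : F y <= F (K%:R * y).
Proof.
by rewrite [leLHS]cdfr_selfsim; apply: mean_le => d; rewrite le_cdfr // lerBlDr lerDl.
Qed.

Lemma cdfr_scale_le y : F (K%:R * (y - 1) + 1) <= F y.
Proof.
rewrite [leRHS]cdfr_selfsim; apply: mean_ge => d; rewrite le_cdfr //.
have : (d%:R + 1 : R) <= K%:R by rewrite natr1 ler_nat ltn_ord.
lra.
Qed.

Lemma cdfr_lt0 y : y < 0 -> F y = 0.
Proof.
move=> y_lt0; apply/eqP; rewrite eq_le cdfr_ge0 andbT.
apply/ler_addgt0Pr => e e_gt0; rewrite add0r.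
have /cvgrPdist_lt/(_ e e_gt0) [T [_ small]] := cdfr_Ny0 mu.
have F_le n : F y <= F (K%:R ^+ n * y).
  elim: n => [|n IHn]; first by rewrite expr0 mul1r.
  by apply: le_trans IHn _; rewrite exprS -mulrA cdfr_le_scale.
have [n T_lt] := natrX_unbounded (T / y) selfsim_scale_gt1.
rewrite -(ltr_nM2r y_lt0) divfK ?lt_eqF // in T_lt.
apply: le_trans (F_le n) _.
by have := small _ T_lt; rewrite sub0r normrN ger0_norm ?cdfr_ge0 // => /ltW.
Qed.

Lemma cdfr_gt1 y : 1 < y -> F y = 1.
Proof.
move=> y_gt1; apply/eqP; rewrite eq_le cdfr_le1 /=.
apply/ler_addgt0Pr => e e_gt0.
have /cvgrPdist_lt/(_ e e_gt0) [T [_ large]] := cdfr_y1 mu.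
have F_ge n : F (K%:R ^+ n * (y - 1) + 1) <= F y.
  elim: n => [|n IHn]; first by rewrite expr0 mul1r subrK.
  apply: le_trans IHn.
  have -> : K%:R ^+ n.+1 * (y - 1) + 1 =
            K%:R * ((K%:R ^+ n * (y - 1) + 1) - 1) + 1 :> R by rewrite exprS; ring.
  exact: cdfr_scale_le.
have y1_gt0 : 0 < y - 1 by rewrite subr_gt0.
have [n T_lt] := natrX_unbounded ((T - 1) / (y - 1)) selfsim_scale_gt1.
rewrite -(ltr_pM2r y1_gt0) divfK ?gt_eqF // in T_lt.
have := large (K%:R ^+ n * (y - 1) + 1) ltac:(lra).
rewrite ger0_norm ?subr_ge0 ?cdfr_le1 //.
have := F_ge n; lra.
Qed.

Lemma cdfr_affine_cell x j :
  (forall d : 'I_K, F (K%:R * x - d%:R) =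
     (d < j)%N%:R + (d == j :> nat)%:R * F (K%:R * x - j%:R)) ->
  F x = mass_below K B j + mass_at K B j * F (K%:R * x - j%:R).
Proof.
move=> F_cell; rewrite cdfr_selfsim.
under eq_bigr do rewrite F_cell.
rewrite big_split /= -mulr_suml mulrDr mulrA /mass_below /mass_at.
by congr (_ * _ + _); rewrite big_mkcondr; apply: eq_bigr => d _; case: (d < j)%N.
Qed.

Lemma cdfr0 : F 0 = 0.
Proof.
have F0 : F 0 = mass_below K B 0 + mass_at K B 0 * F 0.
  have := cdfr_affine_cell 0 0; rewrite mulr0 subr0; apply=> -[[|d] dK] /=.
    by rewrite subr0 add0r mul1r.
  by rewrite sub0r cdfr_lt0 // mul0r addr0.
have : mass_at K B 0 <= 2^-1 :> R by case: mu_ss => _ B_ge2 _; exact: mass_at_le_half.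
rewrite mass_below0 add0r in F0.
by have := cdfr_ge0 mu 0; nra.
Qed.

Lemma cdfr1 : F 1 = 1.
Proof.
have F1 : F 1 = mass_below K B K.-1 + mass_at K B K.-1 * F 1.
  have := cdfr_affine_cell 1 K.-1; rewrite mulr1.
  have K_pred : K%:R - K.-1%:R = 1 :> R.
    by rewrite -[X in X%:R - _](prednK K_gt0) -natr1 addrAC subrr add0r.
  rewrite K_pred; apply=> d.
  case: ltngtP => [d_lt | d_gt | ->] /=; last by rewrite K_pred add0r mul1r.
  - rewrite mul0r addr0 cdfr_gt1 //.
    have : (d.+2%:R : R) <= K%:R by rewrite ler_nat; lia.
    by rewrite -addn2 natrD; lra.
  - by have := ltn_ord d; lia.
have mass_sum : mass_below K B K.-1 + mass_at K B K.-1 = 1 :> R.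
  by rewrite -mass_belowS prednK // mass_belowK //; case: mu_ss => _ B_ge2 _; lia.
have : mass_at K B K.-1 <= 2^-1 :> R by case: mu_ss => _ B_ge2 _; exact: mass_at_le_half.
by nra.
Qed.


Lemma cdfr_le0 y : y <= 0 -> F y = 0.
Proof. by rewrite le_eqVlt => /predU1P[->|/cdfr_lt0]; [exact: cdfr0 |]. Qed.

Lemma cdfr_ge1 y : 1 <= y -> F y = 1.
Proof. by rewrite le_eqVlt => /predU1P[<-|/cdfr_gt1]; [exact: cdfr1 |]. Qed.

Lemma cdfr_cell j u : (j < K)%N -> 0 <= u <= 1 ->
  F ((j%:R + u) / K%:R) = mass_below K B j + mass_at K B j * F u.
Proof.
move=> jK /andP[u_ge0 u_le1].
have K_neq0 : K%:R != 0 :> R by rewrite pnatr_eq0 -lt0n.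
set x := (j%:R + u) / K%:R.
have Kx : K%:R * x - j%:R = u by rewrite mulrC divfK // addrC addKr.
rewrite -Kx; apply: cdfr_affine_cell => d.
have -> : K%:R * x - d%:R = u + j%:R - d%:R by rewrite -Kx; ring.
case: ltngtP => [d_lt | d_gt | ->] /=.
- rewrite mul0r addr0 cdfr_ge1 //.
  have : (d%:R + 1 : R) <= j%:R by rewrite natr1 ler_nat.
  lra.
- rewrite mul0r addr0 cdfr_le0 //.
  have : (j%:R + 1 : R) <= d%:R by rewrite natr1 ler_nat.
  lra.
- by rewrite Kx addrK add0r mul1r.
Qed.

Lemma cdfr_cell_frac j t m : (j < K)%N -> (t <= m)%N -> (0 < m)%N ->
  F ((j * m + t)%:R / (K * m)%:R) =
  mass_below K B j + mass_at K B j * F (t%:R / m%:R).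
Proof.
move=> jK tm m_gt0.
have m_neq0 : m%:R != 0 :> R by rewrite pnatr_eq0 -lt0n.
have K_neq0 : K%:R != 0 :> R by rewrite pnatr_eq0 -lt0n.
rewrite -cdfr_cell //; last first.
  by rewrite divr_ge0 ?ler0n // ler_pdivrMr ?ltr0n // mul1r ler_nat.
by congr F; rewrite natrD !natrM; field; apply/andP.
Qed.

Lemma cdfr_grid_step n i : (i < K ^ n)%N ->
  F (gridpt K n i.+1) - F (gridpt K n i) <= 2^-1 ^+ n.
Proof.
rewrite /gridpt; elim: n i => [|n IHn] i.
  by rewrite expn0 ltnS leqn0 => /eqP ->; rewrite !divr1 cdfr1 cdfr0 subr0.
move=> i_lt; have Kn_gt0 : (0 < K ^ n)%N by rewrite expn_gt0 K_gt0.
have jK : (i %/ K ^ n < K)%N by rewrite ltn_divLR // -expnS.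
have tKn : (i %% K ^ n < K ^ n)%N by rewrite ltn_pmod.
rewrite (divn_eq i (K ^ n)) expnS -addnS.
rewrite (cdfr_cell_frac _ _ _ jK tKn Kn_gt0).
rewrite (cdfr_cell_frac _ _ _ jK (ltnW tKn) Kn_gt0).
rewrite opprD addrACA subrr add0r -mulrBr exprS.
apply: ler_pM; rewrite ?mass_at_ge0 ?IHn //.
- by rewrite subr_ge0 le_cdfr // ler_pM2r ?invr_gt0 ?ltr0n // ler_nat.
- by case: mu_ss => _ B_ge2 _; exact: mass_at_le_half.
Qed.

End selfsimilar_cdf.

Section two_level_cells.
Context {R : realType} {N a b : nat} {B1 B2 : seq bool} {mu1 mu2 : probability R R}.
Hypotheses (mu1_ss : selfsim_measure (N ^ a) B1 mu1)
  (mu2_ss : selfsim_measure (N ^ b) B2 mu2).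

Lemma cdfr_two_level r m : (m < N ^ (a + b))%N ->
  (forall i, (i <= N ^ (b + r))%N ->
     cdfr mu1 (gridpt N (b + r) i) = cdfr mu2 (gridpt N (b + r) i)) ->
  exists alpha beta : R, forall t, (t <= N ^ r)%N ->
    cdfr mu1 (gridpt N (a + b + r) (m * N ^ r + t)) =
    alpha + beta * cdfr mu2 (gridpt N r t).
Proof.
move=> m_lt eq_level.
have /expn_gt1_pos[N_gt0 _] := selfsim_scale_gt1 mu1_ss.
have Nr_gt0 : (0 < N ^ r)%N by rewrite expn_gt0 N_gt0.
have Nbr_gt0 : (0 < N ^ (b + r))%N by rewrite expn_gt0 N_gt0.
have j_lt : (m %/ N ^ b < N ^ a)%N by rewrite ltn_divLR ?expn_gt0 ?N_gt0 // -expnD.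
have k_lt : (m %% N ^ b < N ^ b)%N by rewrite ltn_pmod ?expn_gt0 ?N_gt0.
set j := (m %/ N ^ b)%N in j_lt *; set k := (m %% N ^ b)%N in k_lt *.
exists (mass_below (N ^ a) B1 j + mass_at (N ^ a) B1 j * mass_below (N ^ b) B2 k).
exists (mass_at (N ^ a) B1 j * mass_at (N ^ b) B2 k).
move=> t t_le.
have kt_le : (k * N ^ r + t <= N ^ (b + r))%N.
  apply: (@leq_trans (k.+1 * N ^ r)).
    by rewrite mulSn [(N ^ r + _)%N]addnC leq_add2l.
  by rewrite expnD leq_mul2r k_lt orbT.
have -> : (m * N ^ r + t = j * N ^ (b + r) + (k * N ^ r + t))%N.
  by rewrite {1}(divn_eq m (N ^ b)) mulnDl expnD mulnA addnA.
rewrite /gridpt -addnA [(N ^ (a + _))%N]expnD.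
rewrite (cdfr_cell_frac mu1_ss _ _ _ j_lt kt_le Nbr_gt0) -/(gridpt N _ _).
rewrite eq_level // /gridpt expnD (cdfr_cell_frac mu2_ss _ _ _ k_lt t_le Nr_gt0).
by rewrite mulrDr mulrA addrA.
Qed.

End two_level_cells.

Section two_selfsimilar_measures.
Context {R : realType} {N L M : nat} {BL BM : seq bool} {muL muM : probability R R}.
Hypotheses (muL_ss : selfsim_measure (N ^ L) BL muL)
  (muM_ss : selfsim_measure (N ^ M) BM muM).

Local Notation FL := (cdfr muL).
Local Notation FM := (cdfr muM).

Let N_gt0 : (0 < N)%N. Proof. by case/expn_gt1_pos: (selfsim_scale_gt1 muL_ss). Qed.
Let L_gt0 : (0 < L)%N. Proof. by case/expn_gt1_pos: (selfsim_scale_gt1 muL_ss). Qed.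
Let M_gt0 : (0 < M)%N. Proof. by case/expn_gt1_pos: (selfsim_scale_gt1 muM_ss). Qed.

Lemma cdfr_eq_gridpt :
  (forall i, (0 < i < N ^ (L + M))%N ->
     FL (gridpt N (L + M) i) = FM (gridpt N (L + M) i)) ->
  forall n i, (i <= N ^ n)%N -> FL (gridpt N n i) = FM (gridpt N n i).
Proof.
move=> eq_inner.
have eq_base i : (i <= N ^ (L + M))%N ->
    FL (gridpt N (L + M) i) = FM (gridpt N (L + M) i).
  move=> i_le; have [->|i_gt0] := posnP i.
    by rewrite gridpt0 (cdfr0 muL_ss) (cdfr0 muM_ss).
  have [->|i_neq] := eqVneq i (N ^ (L + M))%N.
    by rewrite gridpt_top // (cdfr1 muL_ss) (cdfr1 muM_ss).
  by apply: eq_inner; rewrite i_gt0 ltn_neqAle i_neq.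
move=> n; elim/ltn_ind: n => n IHn i i_le.
have [n_le | n_gt] := leqP n (L + M).
  rewrite -(gridptMn N_gt0 n (L + M - n)) subnKC //; apply: eq_base.
  by rewrite -[X in (_ <= N ^ X)%N](subnKC n_le) expnD leq_mul2r i_le orbT.
have [->| i_lt] := eqVneq i (N ^ n)%N.
  by rewrite gridpt_top // (cdfr1 muL_ss) (cdfr1 muM_ss).
have {}i_lt : (i < N ^ n)%N by rewrite ltn_neqAle i_lt.
set r := (n - (L + M))%N.
have n_eq : n = (L + M + r)%N by rewrite subnKC // ltnW.
have Nr_gt0 : (0 < N ^ r)%N by rewrite expn_gt0 N_gt0.
have m_lt : (i %/ N ^ r < N ^ (L + M))%N by rewrite ltn_divLR // -expnD -n_eq.
have t_le : (i %% N ^ r <= N ^ r)%N by rewrite ltnW // ltn_pmod.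
rewrite n_eq (divn_eq i (N ^ r)).
move: (i %/ N ^ r)%N (i %% N ^ r)%N m_lt t_le => m t m_lt t_le.
have lvlM : (M + r < n)%N by move: L_gt0; lia.
have lvlL : (L + r < n)%N by move: M_gt0; lia.
have lvl_r : (r < n)%N by move: L_gt0; lia.
(* Both sides are affine in the common value at level r, and they agree at the
   two ends t = 0 and t = N ^ r of the cell, which are points of level L + M. *)
have [a [b FL_affine]] := cdfr_two_level muL_ss muM_ss r m m_lt (IHn (M + r) lvlM).
have [a' [b' FM_affine]] : exists a' b' : R, forall t, (t <= N ^ r)%N ->
    FM (gridpt N (L + M + r) (m * N ^ r + t)) = a' + b' * FL (gridpt N r t).
  rewrite [(L + M)%N]addnC; apply: (cdfr_two_level muM_ss muL_ss r m).
    by rewrite addnC.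
  by move=> k k_le; rewrite (IHn (L + r)).
have eq_coarse k : (k <= N ^ (L + M))%N ->
    FL (gridpt N (L + M + r) (k * N ^ r)) = FM (gridpt N (L + M + r) (k * N ^ r)).
  by move=> k_le; rewrite gridptMn //; exact: eq_base.
have eq0 := eq_coarse m (ltnW m_lt).
rewrite -[(m * _)%N]addn0 FL_affine // FM_affine // gridpt0 in eq0.
rewrite (cdfr0 muL_ss) (cdfr0 muM_ss) !mulr0 !addr0 in eq0.
have eq1 := eq_coarse m.+1 m_lt.
rewrite mulSn [(N ^ r + _)%N]addnC FL_affine // FM_affine // gridpt_top // in eq1.
rewrite (cdfr1 muL_ss) (cdfr1 muM_ss) !mulr1 eq0 in eq1.
by rewrite FL_affine // FM_affine // (IHn r) // eq0 (addrI _ eq1).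
Qed.

Lemma cdfr_eq_of_gridpt :
  (forall n i, (i <= N ^ n)%N -> FL (gridpt N n i) = FM (gridpt N n i)) ->
  forall x, 0 <= x <= 1 -> FL x = FM x.
Proof.
move=> eq_grid x /andP[x_ge0 x_le1].
have [->|x_neq1] := eqVneq x 1; first by rewrite (cdfr1 muL_ss) (cdfr1 muM_ss).
have x_in : 0 <= x < 1 by rewrite x_ge0 lt_neqAle x_neq1.
apply/subr0_eq/le_halfX_eq0 => n.
set e := (L * (M * n))%N.
have [i i_lt /andP[lo hi]] := gridpt_bracket N_gt0 e x x_in.
have stepL : FL (gridpt N e i.+1) - FL (gridpt N e i) <= 2^-1 ^+ n.
  have := cdfr_grid_step muL_ss (M * n) i; rewrite /gridpt -!expnM.
  move=> /(_ i_lt) step.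
  by apply: le_trans step _; rewrite ler_wiXn2l ?leq_pmull //; lra.
have stepM : FM (gridpt N e i.+1) - FM (gridpt N e i) <= 2^-1 ^+ n.
  have := cdfr_grid_step muM_ss (L * n) i; rewrite /gridpt -!expnM mulnCA.
  move=> /(_ i_lt) step.
  by apply: le_trans step _; rewrite ler_wiXn2l ?leq_pmull //; lra.
have := le_cdfr muL _ _ lo; have := le_cdfr muL _ _ hi.
have := le_cdfr muM _ _ lo; have := le_cdfr muM _ _ hi.
rewrite (eq_grid _ i) ?(ltnW i_lt) // (eq_grid _ i.+1) // in stepL *.
rewrite ler_norml; lra.
Qed.

End two_selfsimilar_measures.

Lemma cdfBE {R : realType} (mu : probability R R) x :
  cdfr mu 0 = 0 -> 0 <= x -> cdfB mu x = (cdfr mu x)%:E.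
Proof.
move=> F0 x_ge0; rewrite /cdfB -cdfrE.
have -> : `]-oo, x] = `]-oo, 0[ `|` `[0, x] :> set R.
  apply/seteqP; split => y /=; rewrite !in_itv /=.
  - by move=> yx; case: (ltP y 0) => y0; [left | right; apply/andP].
  - by case=> [/ltW y0 | /andP[_ //]]; apply: le_trans x_ge0.
rewrite measureU //; last first.
  by apply/seteqP; split => y //= [/[!in_itv] /= /[swap] /andP[/le_gtF ->]].
rewrite -[LHS]add0e; congr (_ + _)%E; apply/esym/eqP.
have mu_le0 : mu `]-oo, 0] = 0%E by rewrite cdfrE F0.
rewrite eq_le measure_ge0 andbT -mu_le0.
by apply: le_measure; rewrite ?inE //; apply: subitvPr; rewrite bnd_simp.
Qed.

Lemma digit_vector_selfsim {R : realType} {K : nat} {B : seq bool}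
  {mu : probability R R} :
  digit_vector K B -> selfsim K B mu -> selfsim_measure K B mu.
Proof. by case/and4P => _ /eqP sizeB B_ge2 _ mu_ss; split. Qed.

Theorem proposition2p6 (R : realType) (L M N : nat)
  (BL BM : seq bool)
  (hBL : digit_vector (N ^ L) BL) (hBM : digit_vector (N ^ M) BM)
  (muL muM : probability R R)
  (hmuL : selfsim (N ^ L) BL muL) (hmuM : selfsim (N ^ M) BM muM) :
  (forall m : nat, (1 <= m <= (N ^ (L + M)).-1)%N ->
     cdfB muL (m%:R / (N ^ (L + M))%:R) = cdfB muM (m%:R / (N ^ (L + M))%:R))
  <->
  (forall x : R, 0 <= x <= 1 -> cdfB muL x = cdfB muM x).
Proof.
have muL_ss := digit_vector_selfsim hBL hmuL.
have muM_ss := digit_vector_selfsim hBM hmuM.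
have /expn_gt1_pos[N_gt0 _] := selfsim_scale_gt1 muL_ss.
have cdfBL x := cdfBE muL x (cdfr0 muL_ss).
have cdfBM x := cdfBE muM x (cdfr0 muM_ss).
split => [eq_S x /andP[x_ge0 x_le1] | eq_all m /andP[_ m_le]]; last first.
  by apply: eq_all; apply: gridpt_itv N_gt0 _ _ (leq_trans m_le (leq_pred _)).
rewrite cdfBL // cdfBM //; congr EFin.
have := cdfr_eq_of_gridpt muL_ss muM_ss; apply; last by rewrite x_ge0.
have := cdfr_eq_gridpt muL_ss muM_ss; apply=> i /andP[i_gt0 i_lt].
have /andP[g_ge0 _] := gridpt_itv (R := R) N_gt0 _ _ (ltnW i_lt).
have i_range : (1 <= i <= (N ^ (L + M)).-1)%N.
  by rewrite i_gt0 -ltnS prednK // expn_gt0 N_gt0.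
by have := eq_S i i_range; rewrite cdfBL // cdfBM // => -[].
Qed.
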